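(* Let $\{(\mathbf{x}_i,\mathbf{z}_i)\}_{i=1}^n$ be given covariate vectors $\mathbf{x}_i$ and linkage-related variables $\mathbf{z}_i$ from a linked file. Consider a generic record $(\mathbf{x},\mathbf{z},m,\mathbf{y})$, where $(\mathbf{x},\mathbf{z})$ is distributed according to the probability measure $P$ placing mass $1/n$ on each of $(\mathbf{x}_1,\mathbf{z}_1),\dots,(\mathbf{x}_n,\mathbf{z}_n)$; $m\in\{0,1\}$ is a mismatch indicator; and $\mathbf{y}$ is a response whose conditional density given $\mathbf{x}$ is $f(\mathbf{y}\mid\mathbf{x};\boldsymbol\theta)$ and which satisfies $\mathbf{y}\perp \mathbf{z}\mid \mathbf{x}$. Suppose the probability of a correct match satisfies $$\mathbf{P}(m=0\mid \mathbf{x},\mathbf{y},\mathbf{z};\boldsymbol\gamma)=\mathbf{P}(m=0\mid\mathbf{z};\boldsymbol\gamma)=h(\mathbf{z};\boldsymbol\gamma)$$ for a function $h$ taking values in $[0,1)$ on the $\mathbf{z}_i$ (so that $\sum_{k=1}^n(1-h(\mathbf{z}_k;\boldsymbol\gamma))>0$). Then the conditional density of $\mathbf{y}$ given $m=1$, evaluated at any point $\mathbf{y}_i$, is $$f(\mathbf{y}_i\mid m=1)=\sum_{j=1}^n \omega_j(\mathbf{z}_j;\boldsymbol\gamma)\, f(\mathbf{y}_i\mid \mathbf{x}_j;\boldsymbol\theta),\qquad 1\le i\le n,$$ where $$\omega_j(\mathbf{z}_j;\boldsymbol\gamma)=\frac{1-h(\mathbf{z}_j;\boldsymbol\gamma)}{\sum_{k=1}^n\bigl(1-h(\mathbf{z}_k;\boldsymbol\gamma)\bigr)},\qquad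 1\le j\le n.$$
   Context: Setting: post-linkage regression. A linked file consists of pairs $(\mathbf{x}_i,\mathbf{y}_i)$, $1\le i\le n$, with auxiliary variables $\mathbf{z}_i$ related to the record linkage process, and latent mismatch indicators $m_i$ ($m_i=0$ for a correct match, $m_i=1$ for a mismatch). The regression model of interest specifies the conditional density $f(\mathbf{y}\mid\mathbf{x};\boldsymbol\theta)$ with parameter $\boldsymbol\theta$; $\boldsymbol\gamma$ parametrizes the correct-match probability $h(\mathbf{z};\boldsymbol\gamma)=\mathbf{P}(m=0\mid\mathbf{z};\boldsymbol\gamma)$. The variables $\mathbf{x}$ and $\mathbf{z}$ may overlap or be dependent (including $\mathbf{x}=\mathbf{z}$). Notation: $f(\cdot\mid\cdot)$ denotes a (conditional) density of the random variables indicated by its arguments; $\perp$ denotes conditional independence. *)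

From HB Require Import structures.
From mathcomp Require Import all_boot all_order all_algebra.
From mathcomp Require Import all_classical all_reals all_analysis.
Set Implicit Arguments. Unset Strict Implicit. Unset Printing Implicit Defensive.
Import Order.TTheory GRing.Theory Num.Theory.
Local Open Scope classical_set_scope.
Local Open Scope ring_scope.

(* Empirical probability mass of the pair (x, z) under the measure placing
   mass 1/n on each of (xs i, zs i), i < n (duplicates accumulate mass). *)
Definition emp_mass (R : realType) (TX TZ : Type) (n : nat)
  (xs : 'I_n -> TX) (zs : 'I_n -> TZ) (x : TX) (z : TZ) : R :=
  (\sum_(i < n) (if `[< xs i = x /\ zs i = z >] then 1 else 0)) / n%:R.

Definition omega (R : realType) (TZ : Type) (n : nat)
  (h : TZ -> R) (zs : 'I_n -> TZ) (j : 'I_n) : R :=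
  (1 - h (zs j)) / (\sum_(k < n) (1 - h (zs k))).

(* g is (a version of) the conditional density, w.r.t. mu, of Y given the
   event E (which has positive probability):
   P(Y in B | E) = \int_B g dmu for every measurable B. *)
Definition is_cond_density (d dY : measure_display) (R : realType)
  (Omega : measurableType d) (TY : measurableType dY)
  (P : probability Omega R) (mu : {measure set TY -> \bar R})
  (Y : Omega -> TY) (E : set Omega) (g : TY -> R) : Prop :=
  (0 < P E)%E /\
  forall B : set TY, measurable B ->
    P (E `&` Y @^-1` B) = (P E * \int[mu]_(y in B) (g y)%:E)%E.

From HB Require Import structures.
From mathcomp Require Import all_boot all_order all_algebra.
From mathcomp Require Import all_classical all_reals all_analysis.
From mathcomp Require Import measurable_realfun.
From mathcomp Require Import ring.
Set Implicit Arguments. Unset Strict Implicit. Unset Printing Implicit Defensive.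
Import Order.TTheory GRing.Theory Num.Theory.
Local Open Scope classical_set_scope.
Local Open Scope ring_scope.

(* (X, Z) takes the finitely many values (x_i, z_i), each with positive
   probability, so P splits over the distinct atoms {X = x_i, Z = z_i}.  On an
   atom, conditional independence gives P(atom, Y in B) = P(atom) int_B f(.|x_i),
   and the match model keeps the fraction 1 - h(z_i) of it as mismatches.
   Grouping indices with equal pairs turns the sum over atoms weighted by
   P(atom) into the uniform sum over indices with weight 1/n, whence
   P(m = 1, Y in B) = 1/n sum_j (1 - h(z_j)) int_B f(.|x_j).  Taking B = TY
   gives P(m = 1) = 1/n sum_j (1 - h(z_j)), and the quotient is the mixture
   with weights omega_j. *)

Section pair_classes.
Variables (TX TZ : Type) (n : nat) (xs : 'I_n -> TX) (zs : 'I_n -> TZ).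

Definition same_pair (i j : 'I_n) : bool := `[< xs i = xs j /\ zs i = zs j >].

(* TX and TZ need not have a decidable equality: pairs are compared
   classically, and each class of equal pairs is represented by the index
   chosen by [pick]. *)
Definition pair_rep (j : 'I_n) : 'I_n := odflt j [pick i | same_pair i j].

Lemma pair_repP j : xs (pair_rep j) = xs j /\ zs (pair_rep j) = zs j.
Proof.
by rewrite /pair_rep /same_pair; case: pickP => [i /asboolP //|/(_ j)]; rewrite asboolT.
Qed.

Lemma eq_pair_rep i j : xs i = xs j -> zs i = zs j -> pair_rep i = pair_rep j.
Proof.
move=> eq_x eq_z; rewrite /pair_rep.
have eq_class : same_pair^~ i =1 same_pair^~ j.
  by move=> k; rewrite /same_pair eq_x eq_z.
by rewrite (eq_pick eq_class); case: pickP => // /(_ j); rewrite /same_pair asboolT.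
Qed.

Lemma pair_rep_id j : pair_rep (pair_rep j) = pair_rep j.
Proof. by have [eq_x eq_z] := pair_repP j; apply: eq_pair_rep. Qed.

Lemma same_pairE i j : same_pair i j = (pair_rep i == pair_rep j).
Proof.
apply/asboolP/eqP => [[eq_x eq_z]|eq_rep]; first exact: eq_pair_rep.
by have [<- <-] := pair_repP i; rewrite eq_rep; apply: pair_repP.
Qed.

Lemma emp_mass_pair (R : realType) i :
  emp_mass R xs zs (xs i) (zs i) = \sum_(j | pair_rep j == pair_rep i) n%:R^-1.
Proof.
rewrite /emp_mass mulr_suml [RHS]big_mkcond /=; apply: eq_bigr => j _.
by rewrite -same_pairE /same_pair; case: asboolP; rewrite ?mul1r ?mul0r.
Qed.

Lemma emp_mass_gt0 (R : realType) i : 0 < emp_mass R xs zs (xs i) (zs i).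
Proof.
have n_gt0 : (0 < n)%N by apply: leq_ltn_trans (ltn_ord i).
rewrite emp_mass_pair (bigD1 i) //= ltr_pwDl ?invr_gt0 ?ltr0n //.
by apply: sumr_ge0 => j _; rewrite invr_ge0.
Qed.

Lemma sum_pair_reps (R : realType) (F : 'I_n -> \bar R) :
  (forall j, F (pair_rep j) = F j) ->
  (\sum_(i | pair_rep i == i) (emp_mass R xs zs (xs i) (zs i))%:E * F i =
   \sum_(j < n) (n%:R^-1)%:E * F j)%E.
Proof.
move=> F_rep.
rewrite [RHS](partition_big pair_rep (fun i => pair_rep i == i)) => [|j _]; last first.
  by rewrite pair_rep_id.
apply: eq_bigr => i /eqP i_rep; rewrite emp_mass_pair i_rep -sumEFin.
rewrite ge0_sume_distrl => [|j _]; last by rewrite lee_fin invr_ge0.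
by apply: eq_bigr => j /eqP <-; rewrite F_rep.
Qed.

End pair_classes.

Lemma mulIe_fin_gt0 (R : realDomainType) (z : \bar R) :
  z \is a fin_num -> (0 < z)%E -> injective (fun x => x * z)%E.
Proof.
move=> z_fin z_gt0; apply: mono_inj (lee_pmul2r z_fin z_gt0) => //.
exact: le_anti.
Qed.

Lemma probability_setI_almost_sure d (T : measurableType d) (R : realType)
    (P : probability T R) (U C : set T) :
  measurable U -> P U = 1%E -> measurable C -> P (C `&` U) = P C.
Proof.
move=> mU PU1 mC.
have PCU0 : P (C `\` U) = 0%E.
  apply: (subset_measure0 (B := ~` U)) => //; first exact: measurableD.
    exact: measurableC.
  by have := probability_setC P mU; rewrite PU1 subee.
have -> : P C = (P (C `\` U) + P (C `&` U))%E by exact: measureDI.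
by rewrite PCU0 add0e.
Qed.

Lemma ge0_integral_lincomb d (T : measurableType d) (R : realType)
    (mu : {measure set T -> \bar R}) (D : set T) (I : Type) (s : seq I)
    (c : I -> R) (g : I -> T -> R) :
  measurable D -> (forall i, 0 <= c i) -> (forall i, measurable_fun D (g i)) ->
  (forall i x, D x -> 0 <= g i x) ->
  (\int[mu]_(x in D) (\sum_(i <- s) c i * g i x)%:E =
   \sum_(i <- s) (c i)%:E * \int[mu]_(x in D) (g i x)%:E)%E.
Proof.
move=> mD c_ge0 mg g_ge0.
under eq_integral => x _ do rewrite -sumEFin.
rewrite ge0_integral_sum // => [|i|i x Dx]; last 2 first.
- by apply/measurable_EFinP; apply: measurable_funM => //; apply: measurable_cst.
- by rewrite lee_fin mulr_ge0 ?g_ge0.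
apply: eq_bigr => i _; under eq_integral do rewrite EFinM.
rewrite ge0_integralZl_EFin // => [x Dx|]; first by rewrite lee_fin g_ge0.
exact/measurable_EFinP.
Qed.

Section empirical_atoms.
Local Open Scope ereal_scope.
Context d (T : measurableType d) (R : realType) (P : probability T R).
Variables (TX TZ : Type) (n : nat) (xs : 'I_n -> TX) (zs : 'I_n -> TZ).
Variables (X : T -> TX) (Z : T -> TZ).
Hypothesis n_gt0 : (0 < n)%N.
Hypothesis mX : forall x, measurable [set w | X w = x].
Hypothesis mZ : forall z, measurable [set w | Z w = z].
Hypothesis lawXZ : forall x z,
  P [set w | X w = x /\ Z w = z] = (emp_mass R xs zs x z)%:E.

Let atom i := [set w | X w = xs i /\ Z w = zs i].

Let measurable_atom i : measurable (atom i).
Proof. exact: measurableI (mX _) (mZ _). Qed.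

Let trivIset_atom_reps :
  trivIset [set i | pair_rep xs zs i == i] atom.
Proof.
move=> i j /= /eqP i_rep /eqP j_rep [w [[xi zi] [xj zj]]].
by rewrite -i_rep -j_rep; apply: eq_pair_rep; congruence.
Qed.

Lemma prob_atom_reps :
  P (\big[setU/set0]_(i | pair_rep xs zs i == i) atom i) = 1.
Proof.
rewrite measure_bigsetU_ord_cond //.
rewrite (eq_bigr (fun i => (emp_mass R xs zs (xs i) (zs i))%:E * 1)) => [|i _].
  2: by rewrite mule1; apply: lawXZ.
rewrite sum_pair_reps //; under eq_bigr do rewrite mule1.
rewrite sumEFin sumr_const card_ord.
by rewrite -[(_ *+ n)%R]mulr_natr mulVf // pnatr_eq0 -lt0n.
Qed.

Lemma total_probability_atoms C : measurable C ->
  P C = \sum_(i | pair_rep xs zs i == i) P (C `&` atom i).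
Proof.
move=> mC; rewrite -(probability_setI_almost_sure _ prob_atom_reps mC); last first.
  by apply: bigsetU_measurable => i _.
rewrite big_distrr /= measure_bigsetU_ord_cond // => [i _|]; first exact: measurableI.
exact: trivIset_setIl.
Qed.

End empirical_atoms.

Section mismatch_model.
Local Open Scope ereal_scope.
Context d dY (Omega : measurableType d) (TY : measurableType dY) (R : realType).
Variables (P : probability Omega R) (mu : {measure set TY -> \bar R}).
Variables (TX TZ : Type) (n : nat) (xs : 'I_n -> TX) (zs : 'I_n -> TZ).
Variables (X : Omega -> TX) (Z : Omega -> TZ) (M : Omega -> bool) (Y : Omega -> TY).
Variables (f : TY -> TX -> R) (h : TZ -> R).
Hypothesis n_gt0 : (0 < n)%N.
Hypothesis mX : forall x, measurable [set w | X w = x].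
Hypothesis mZ : forall z, measurable [set w | Z w = z].
Hypothesis mM : measurable [set w | M w].
Hypothesis mY : measurable_fun setT Y.
Hypothesis lawXZ : forall x z,
  P [set w | X w = x /\ Z w = z] = (emp_mass R xs zs x z)%:E.
Hypothesis densY : forall x (B : set TY), measurable B ->
  P [set w | X w = x /\ B (Y w)] =
  P [set w | X w = x] * \int[mu]_(y in B) (f y x)%:E.
Hypothesis indepYZ : forall x z (B : set TY), measurable B ->
  P [set w | X w = x /\ Z w = z /\ B (Y w)] * P [set w | X w = x] =
  P [set w | X w = x /\ B (Y w)] * P [set w | X w = x /\ Z w = z].
Hypothesis match_law : forall x z (B : set TY), measurable B ->
  P [set w | X w = x /\ Z w = z /\ B (Y w) /\ M w = false] =
  (h z)%:E * P [set w | X w = x /\ Z w = z /\ B (Y w)].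

Let atom i := [set w | X w = xs i /\ Z w = zs i].

Let measurable_atom i : measurable (atom i).
Proof. exact: measurableI (mX _) (mZ _). Qed.

Let measurable_Y B : measurable B -> measurable (Y @^-1` B).
Proof. by move=> mB; rewrite -[_ @^-1` _]setTI; apply: mY. Qed.

Let prob_fin_num A : measurable A -> P A \is a fin_num.
Proof. exact: fin_num_measure. Qed.

Let prob_X_gt0 i : 0 < P [set w | X w = xs i].
Proof.
apply: (@lt_le_trans _ _ (P (atom i))).
  by rewrite /atom lawXZ lte_fin emp_mass_gt0.
by have := measureIl P (mX (xs i)) (mZ (zs i)).
Qed.

Let atom_YE i B :
  [set w | X w = xs i /\ Z w = zs i /\ B (Y w)] = atom i `&` Y @^-1` B.
Proof. by apply/seteqP; split => w; rewrite /atom /=; tauto. Qed.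

Lemma prob_atom_Y i B : measurable B ->
  P (atom i `&` Y @^-1` B) = P (atom i) * \int[mu]_(y in B) (f y (xs i))%:E.
Proof.
move=> mB; apply: (mulIe_fin_gt0 (prob_fin_num (mX (xs i))) (prob_X_gt0 i)) => /=.
rewrite -atom_YE indepYZ // densY //.
rewrite -/(atom i) (muleC (P [set w | X w = xs i])) muleAC.
by rewrite (muleC (\int[mu]_(y in B) _)).
Qed.

Lemma prob_mismatch_atom i B : measurable B ->
  P ([set w | M w] `&` Y @^-1` B `&` atom i) =
  (1 - h (zs i))%:E * P (atom i `&` Y @^-1` B).
Proof.
move=> mB; set S := atom i `&` Y @^-1` B.
have mS : measurable S by apply: measurableI (measurable_atom i) (measurable_Y mB).
have mMF : measurable [set w | M w = false].
  have -> : [set w | M w = false] = ~` [set w | M w].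
    by apply/seteqP; split => w /=; case: (M w).
  exact: measurableC.
have -> : [set w | M w] `&` Y @^-1` B `&` atom i = S `\` [set w | M w = false].
  by apply/seteqP; split => w; rewrite /S /atom /=; case: (M w); intuition.
have -> : P (S `\` [set w | M w = false]) = P S - P (S `&` [set w | M w = false]).
  by apply: measureD => //; rewrite ltey_eq prob_fin_num.
have -> : S `&` [set w | M w = false] =
    [set w | X w = xs i /\ Z w = zs i /\ B (Y w) /\ M w = false].
  by apply/seteqP; split => w; rewrite /S /atom /=; tauto.
rewrite match_law // atom_YE -/S -(fineK (prob_fin_num mS)).
by rewrite -EFinM -EFinB -EFinM mulrBl mul1r.
Qed.

Lemma integral_f_setT i : \int[mu]_(y in setT) (f y (xs i))%:E = 1.
Proof.
apply: (mulIe_fin_gt0 (prob_fin_num (mX (xs i))) (prob_X_gt0 i)) => /=.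
rewrite mul1e muleC -densY //.
by congr (P _); apply/seteqP; split => w //= [].
Qed.

Lemma prob_mismatch_Y B : measurable B ->
  P ([set w | M w] `&` Y @^-1` B) =
  \sum_(j < n) (n%:R^-1 * (1 - h (zs j)))%:E * \int[mu]_(y in B) (f y (xs j))%:E.
Proof.
move=> mB; rewrite (total_probability_atoms n_gt0 mX mZ lawXZ); last first.
  exact: measurableI (measurable_Y mB).
under eq_bigr => i _ do rewrite prob_mismatch_atom // prob_atom_Y // muleCA /atom lawXZ.
rewrite sum_pair_reps => [|j]; last by have [-> ->] := pair_repP xs zs j.
by apply: eq_bigr => j _; rewrite muleA.
Qed.

Lemma prob_mismatch :
  P [set w | M w] = (\sum_(j < n) n%:R^-1 * (1 - h (zs j)))%:E.
Proof.
rewrite -[[set w | M w]]setIT -(preimage_setT Y) prob_mismatch_Y //.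
by under eq_bigr do rewrite integral_f_setT mule1; rewrite sumEFin.
Qed.

End mismatch_model.

Theorem lemma1 (d dY : measure_display) (R : realType)
  (Omega : measurableType d) (TY : measurableType dY)
  (TX TZ : Type)
  (P : probability Omega R) (mu : {measure set TY -> \bar R})
  (n : nat) (xs : 'I_n -> TX) (zs : 'I_n -> TZ)
  (X : Omega -> TX) (Z : Omega -> TZ) (M : Omega -> bool) (Y : Omega -> TY)
  (f : TY -> TX -> R) (h : TZ -> R)
  (hn : (0 < n)%N)
  (hXmeas : forall x, measurable [set w | X w = x])
  (hZmeas : forall z, measurable [set w | Z w = z])
  (hMmeas : measurable [set w | M w])
  (hYmeas : measurable_fun setT Y)
  (* (X, Z) ~ empirical measure: mass 1/n on each (xs i, zs i) *)
  (hlaw : forall x z,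
     P [set w | X w = x /\ Z w = z] = (emp_mass R xs zs x z)%:E)
  (* f(. | x) is a density (w.r.t. mu) of Y given X = x *)
  (hf_meas : forall x, measurable_fun setT (fun y => f y x))
  (hf_ge0 : forall y x, 0 <= f y x)
  (hdens : forall x (B : set TY), measurable B ->
     P [set w | X w = x /\ B (Y w)] =
     (P [set w | X w = x] * \int[mu]_(y in B) (f y x)%:E)%E)
  (* Y independent of Z given X *)
  (hci : forall x z (B : set TY), measurable B ->
     (P [set w | X w = x /\ Z w = z /\ B (Y w)] * P [set w | X w = x])%E =
     (P [set w | X w = x /\ B (Y w)] * P [set w | X w = x /\ Z w = z])%E)
  (* P(m = 0 | x, y, z) = P(m = 0 | z) = h(z); m = 0 iff M w = false *)
  (hmatch : forall x z (B : set TY), measurable B ->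
     P [set w | X w = x /\ Z w = z /\ B (Y w) /\ M w = false] =
     ((h z)%:E * P [set w | X w = x /\ Z w = z /\ B (Y w)])%E)
  (hh : forall i : 'I_n, 0 <= h (zs i) < 1) :
  is_cond_density P mu Y [set w | M w]
    (fun y => \sum_(j < n) omega h zs j * f y (xs j)).
Proof.
set S := \sum_(k < n) (1 - h (zs k)).
have match_ge0 k : 0 <= 1 - h (zs k).
  by have /andP[_ /ltW] := hh k; rewrite subr_ge0.
have S_gt0 : 0 < S.
  rewrite /S (bigD1 (Ordinal hn)) //= ltr_pwDl ?sumr_ge0 // subr_gt0.
  by have /andP[] := hh (Ordinal hn).
have omega_ge0 j : 0 <= omega h zs j by rewrite divr_ge0 // ltW.
have PM : P [set w | M w] = (n%:R^-1 * S)%:E.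
  rewrite (prob_mismatch hn hXmeas hZmeas hMmeas hYmeas hlaw hdens hci hmatch).
  by rewrite mulr_sumr.
split; first by rewrite PM lte_fin mulr_gt0 ?invr_gt0 ?ltr0n.
move=> B mB.
rewrite (prob_mismatch_Y hn hXmeas hZmeas hMmeas hYmeas hlaw hdens hci hmatch mB).
rewrite ge0_integral_lincomb // => [|j]; last exact: measurable_funTS.
rewrite PM ge0_sume_distrr => [|j _]; last first.
  by rewrite mule_ge0 ?lee_fin // integral_ge0 // => y _; rewrite lee_fin.
apply: eq_bigr => j _; rewrite muleA -EFinM /omega -/S.
by congr (_%:E * _)%E; field; rewrite gt_eqF // pnatr_eq0 -lt0n.
Qed.
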